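(* Let $G=(V,E)$ be a claw-free graph, let $L\subseteq V$ be such that $G[L]$ is an induced path or a hole, and let $\mathbf{j}\in V\setminus L$. Write $N=\Gamma_L(\mathbf{j})$. Then one of the following holds: (a.i) $N=\emptyset$; (a.ii) $|N|=2$ and the two vertices of $N$ are adjacent; (a.iii) $|N|=4$ and $G[N]$ is either a disjoint union of two edges or a path with three edges; (a.iv) $L$ is a hole of length four and $N=L$; (a.v) $L$ is an induced path with at least one edge and $N$ consists of the two endpoints of $L$; (b.i) $|N|=3$, $G[N]$ is a path with two edges, and each vertex of $N$ has two neighbours in $L$; (b.ii) $L$ is a hole of length five and $N=L$; (b.iii) $L$ is an induced path and $N$ consists of exactly one endpoint of $L$; (b.iv) $L$ is an induced path and $N=\{\mathbf{e},\mathbf{x},\mathbf{y}\}$ where $\mathbf{e}$ is an endpoint of $L$ and $\mathbf{x},\mathbf{y}$ are adjacent vertices of $L$.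
   Context: A hole is an induced cycle of length at least 4. An induced path is a vertex set $\{\mathbf{j}_0,\dots,\mathbf{j}_\ell\}$ whose induced edges are exactly $\{\mathbf{j}_i,\mathbf{j}_{i+1}\}$, $0\le i<\ell$; its endpoints are $\mathbf{j}_0,\mathbf{j}_\ell$. The claw is $K_{1,3}$; claw-free means no four vertices induce a claw. $\Gamma_L(\mathbf{j})=\Gamma(\mathbf{j})\cap L$ is the set of neighbours of $\mathbf{j}$ in $L$. *)

(* A simple graph is a symmetric irreflexive relation e on a finType T. *)
From mathcomp Require Import all_boot.
Set Implicit Arguments. Unset Strict Implicit. Unset Printing Implicit Defensive.

Definition claw_free (T : finType) (e : rel T) : Prop :=
  ~ exists a b c d : T,
      [&& e a b, e a c, e a d, b != c, b != d, c != d,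
          ~~ e b c, ~~ e b d & ~~ e c d].

Definition induced_path (T : finType) (e : rel T) (p : seq T) : Prop :=
  0 < size p /\ uniq p /\
  forall (x0 : T) (i k : nat), i < size p -> k < size p ->
    e (nth x0 p i) (nth x0 p k) = (i == k.+1) || (k == i.+1).

Definition hole (T : finType) (e : rel T) (p : seq T) : Prop :=
  4 <= size p /\ uniq p /\
  forall (x0 : T) (i k : nat), i < size p -> k < size p ->
    e (nth x0 p i) (nth x0 p k) =
      (i == k.+1 %% size p) || (k == i.+1 %% size p).

Definition nbhd_in (T : finType) (e : rel T) (L : {set T}) (j : T) : {set T} :=
  [set y in L | e j y].

Definition induces_path_edges (T : finType) (e : rel T) (N : {set T}) (k : nat) : Prop :=
  exists q : seq T, size q = k.+1 /\ induced_path e q /\ N = [set x in q].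

Definition induces_2K2 (T : finType) (e : rel T) (N : {set T}) : Prop :=
  exists a b c d : T, N = [set a; b; c; d] /\ #|N| = 4 /\
    forall x y, x \in N -> y \in N ->
      e x y = ([set x; y] == [set a; b]) || ([set x; y] == [set c; d]).

From mathcomp Require Import all_boot.
From mathcomp Require Import zify.
Set Implicit Arguments. Unset Strict Implicit. Unset Printing Implicit Defensive.

(* Read the neighbours of j on L through their positions along L.  Claw-freeness at j
   forbids three pairwise non-consecutive neighbours; claw-freeness at an inner vertex v
   of an induced path forbids j to see v but neither path-neighbour of v, since j and
   those two neighbours would be the leaves of a claw centred at v.  The position sets
   obeying both rules are the nine shapes of [index_shape], and for an induced path each
   shape is one of the listed outcomes.  If L is a hole and j sees all of it, the claw
   on three alternate vertices leaves only lengths 4 and 5.  Otherwise j misses some x,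
   and deleting x leaves an induced path whose ends are adjacent to x; a claw centred at
   an end then rules out every shape where j sees an end but not its path-neighbour. *)

Definition stable3_free n (S : nat -> bool) :=
  forall i k l, i.+1 < k -> k.+1 < l -> l < n -> S i -> S k -> S l -> False.

Definition no_inner_isolated n (S : nat -> bool) :=
  forall i, 0 < i -> i.+1 < n -> S i -> S i.-1 || S i.+1.

Definition indexed_by n (S : nat -> bool) (l : seq nat) :=
  forall i, i < n -> S i = (i \in l).

(* [S i] stands for "j is adjacent to the i-th vertex of an induced path on n vertices". *)
Variant index_shape n (S : nat -> bool) : Prop :=
  | ShapeNil of indexed_by n S [::]
  | ShapeEnd a of (a = 0 \/ a = n.-1) & a < n & indexed_by n S [:: a]
  | ShapeEdge a of a.+1 < n & indexed_by n S [:: a; a.+1]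
  | ShapeP3 a of a.+2 < n & indexed_by n S [:: a; a.+1; a.+2]
  | ShapeP4 a of a.+3 < n & indexed_by n S [:: a; a.+1; a.+2; a.+3]
  | Shape2K2 a c of a.+2 < c & c.+1 < n & indexed_by n S [:: a; a.+1; c; c.+1]
  | ShapeEnds of 2 < n & indexed_by n S [:: 0; n.-1]
  | ShapeEdgeEnd a of a.+3 < n & indexed_by n S [:: a; a.+1; n.-1]
  | ShapeEndEdge c of 1 < c & c.+1 < n & indexed_by n S [:: 0; c; c.+1].

Section IndexShape.

Variables (n : nat) (S : nat -> bool).
Hypotheses (S_stable3 : stable3_free n S) (S_inner : no_inner_isolated n S).

Lemma inner_min_succ a : 0 < a -> a.+1 < n -> S a ->
  (forall i, i < n -> S i -> a <= i) -> S a.+1.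
Proof.
by move=> a_gt0 a_lt Sa amin; case/orP: (S_inner a_gt0 a_lt Sa) => // /amin; lia.
Qed.

Lemma inner_max_pred b : 0 < b -> b.+1 < n -> S b ->
  (forall i, i < n -> S i -> i <= b) -> S b.-1.
Proof.
by move=> b_gt0 b_lt Sb bmax; case/orP: (S_inner b_gt0 b_lt Sb) => // /bmax; lia.
Qed.

Section Spread.

Variables a b : nat.
Hypotheses (ab : a.+1 < b) (bn : b < n) (Sa : S a) (Sb : S b).
Hypothesis S_bounds : forall i, i < n -> S i -> a <= i <= b.

Lemma spread_mem i : i < n ->
  S i = [|| i == a, i == b, (i == a.+1) && S a.+1 | (i == b.-1) && S b.-1].
Proof.
move=> hi; apply/idP/idP => [Si|]; last first.
  by case/or4P => [/eqP->|/eqP->|/andP[/eqP->]|/andP[/eqP->]].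
have /andP[ai ib] := S_bounds hi Si.
have [/andP[h1 h2]|nmid] := boolP (a.+1 < i < b.-1).
  by case: (S_stable3 h1 _ bn Sa Si Sb); lia.
have : i = a \/ i = b \/ i = a.+1 \/ i = b.-1 by lia.
by case=> [|[|[]]] ei; subst i; rewrite ?Si !eqxx ?orbT.
Qed.

Lemma spread_min_eq0 : ~~ S a.+1 -> a = 0.
Proof.
apply: contraNeq; rewrite -lt0n => a_gt0.
by apply: inner_min_succ => // [|i hi /S_bounds]; lia.
Qed.

Lemma spread_max_last : ~~ S b.-1 -> b = n.-1.
Proof.
apply: contraNeq => nb; have b_gt0 : 0 < b by lia.
by apply: inner_max_pred => // [|i hi /S_bounds]; lia.
Qed.

Lemma index_shape_spread : index_shape n S.
Proof.
case Su : (S a.+1); case Sv : (S b.-1).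
- have [b2|[b3|b4]] : b = a.+2 \/ b = a.+3 \/ a.+3 < b by lia.
  + apply: (ShapeP3 (a := a)) => [|i hi]; first lia.
    by rewrite spread_mem // Su Sv !inE; lia.
  + apply: (ShapeP4 (a := a)) => [|i hi]; first lia.
    by rewrite spread_mem // Su Sv !inE; lia.
  + apply: (Shape2K2 (a := a) (c := b.-1)) => [||i hi]; try lia.
    by rewrite spread_mem // Su Sv !inE; lia.
- have bn1 := spread_max_last (negbT Sv).
  have nb2 : b != a.+2 by apply/eqP => b2; move: Sv; rewrite b2 /= Su.
  apply: (ShapeEdgeEnd (a := a)) => [|i hi]; first lia.
  by rewrite spread_mem // Su Sv !inE; lia.
- have a0 := spread_min_eq0 (negbT Su).
  have nb2 : b != a.+2 by apply/eqP => b2; move: Sv; rewrite b2 /= Su.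
  apply: (ShapeEndEdge (c := b.-1)) => [||i hi]; try lia.
  by rewrite spread_mem // Su Sv !inE; lia.
- have a0 := spread_min_eq0 (negbT Su); have bn1 := spread_max_last (negbT Sv).
  apply: ShapeEnds => [|i hi]; first lia.
  by rewrite spread_mem // Su Sv !inE; lia.
Qed.

End Spread.

Lemma index_shapeP : index_shape n S.
Proof.
have [/existsP[[i0 hi0] /= Si0]|/existsPn none] := boolP [exists i : 'I_n, S i];
  last by apply: ShapeNil => i hi; rewrite (negbTE (none (Ordinal hi))).
have exS : exists i, (i < n) && S i by exists i0; rewrite hi0.
have [a /andP[an Sa] amin] := ex_minnP exS.
have [|b /andP[bn Sb] bmax] := @ex_maxnP _ n exS; first by move=> i /andP[]; lia.
have ext i : i < n -> S i -> a <= i <= b.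
  move=> hi Si; have hS : (i < n) && S i by rewrite hi.
  by rewrite amin // bmax.
have [ab|ba|eb] := ltngtP a.+1 b.
- exact: (index_shape_spread ab bn Sa Sb ext).
- have ea : b = a by have := ext b bn Sb; lia.
  apply: (ShapeEnd (a := a)) => // [|i hi]; last first.
    by rewrite inE; apply/idP/eqP => [/(ext i hi)|->]; lia.
  have [->|a_gt0] := posnP a; [by left | right].
  apply/eqP; apply: contraT => a_lt; have a1 : a.+1 < n by lia.
  have Sa1 : S a.+1 by apply: inner_min_succ => // i hi /(ext i hi); lia.
  by have := ext _ a1 Sa1; lia.
- apply: (ShapeEdge (a := a)) => [|i hi]; first lia.
  rewrite !inE; apply/idP/idP => [/(ext i hi)|/orP[]/eqP->]; rewrite ?eb //; lia.
Qed.

End IndexShape.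

Lemma nth_rot (A : Type) (x0 : A) (s : seq A) k i : k <= size s -> i < size s ->
  nth x0 (rot k s) i = nth x0 s ((i + k) %% size s).
Proof.
move=> hk hi; rewrite /rot nth_cat size_drop.
have [lt_i|ge_i] := ltnP i (size s - k).
  by rewrite nth_drop addnC modn_small //; lia.
rewrite nth_take; last lia.
by rewrite -(subnK (_ : size s <= i + k)) ?modnDr ?modn_small; [congr nth; lia | lia | lia].
Qed.

Lemma eqn_succ_mod_addr n i l k : i < n ->
  ((i + k) %% n == ((l + k) %% n).+1 %% n) = (i == l.+1 %% n).
Proof. by move=> hi; rewrite -addn1 modnDml addn1 -addSn eqn_modDr modn_small. Qed.

Lemma eq_set2 (T : finType) (x y z w : T) : z != w ->
  ([set x; y] == [set z; w]) = ((x == z) && (y == w)) || ((x == w) && (y == z)).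
Proof.
move=> zw; apply/eqP/idP => [E|/orP[]/andP[/eqP-> /eqP->] //]; last exact: setUC.
have /set2P[xz|xw] : x \in [set z; w] by rewrite -E set21.
- have /set2P[wx|->] : w \in [set x; y] by rewrite E set22.
    by move: zw; rewrite wx xz eqxx.
  by rewrite xz !eqxx.
- have /set2P[zx|->] : z \in [set x; y] by rewrite E set21.
    by move: zw; rewrite zx xw eqxx.
  by rewrite xw !eqxx orbT.
Qed.

Definition nbhd_classification (T : finType) (e : rel T) (p : seq T) (j : T) :=
  let L := [set x in p] in
  let N := nbhd_in e L j in
  N = set0
  \/ (#|N| = 2 /\ exists a b, N = [set a; b] /\ e a b)
  \/ (#|N| = 4 /\ (induces_2K2 e N \/ induces_path_edges e N 3))
  \/ (hole e p /\ size p = 4 /\ N = L)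
  \/ (induced_path e p /\ 2 <= size p /\ N = [set head j p; last j p])
  \/ (#|N| = 3 /\ induces_path_edges e N 2 /\ forall y, y \in N -> #|nbhd_in e L y| = 2)
  \/ (hole e p /\ size p = 5 /\ N = L)
  \/ (induced_path e p /\ (N = [set head j p] \/ N = [set last j p]))
  \/ (induced_path e p /\ exists ep x y,
        (ep = head j p \/ ep = last j p) /\ x \in L /\ y \in L /\ e x y /\
        #|N| = 3 /\ N = [set ep; x; y]).

Section ClawFree.

Variables (T : finType) (e : rel T).
Hypotheses (e_sym : symmetric e) (e_claw : claw_free e).

Lemma claw_freeP a b c d : e a b -> e a c -> e a d ->
  b != c -> b != d -> c != d -> [|| e b c, e b d | e c d].
Proof.
move=> ab ac ad bc bd cd; apply: contraT; rewrite !negb_or => /and3P[nbc nbd ncd].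
by case: e_claw; exists a, b, c, d; rewrite ab ac ad bc bd cd nbc nbd ncd.
Qed.

Section IndexedNeighbourhood.

Variables (s : seq T) (x0 y : T) (l : seq nat).
Hypotheses (y_nbhd : indexed_by (size s) (fun i => e y (nth x0 s i)) l)
  (l_small : all (fun i => i < size s) l).

Lemma nbhd_in_indexed : nbhd_in e [set x in s] y = [set x in map (nth x0 s) l].
Proof.
apply/setP => x; rewrite !inE; apply/andP/mapP => [[xs yx]|[i il ->]].
  by exists (index x s); rewrite ?nth_index // -y_nbhd ?index_mem ?nth_index.
have hi : i < size s := allP l_small i il.
by rewrite mem_nth // y_nbhd.
Qed.

Lemma nbhd_in_indexedP x :
  reflect (exists2 i : nat, i \in l & x = nth x0 s i) (x \in nbhd_in e [set x in s] y).
Proof.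
by rewrite nbhd_in_indexed inE; apply: (iffP mapP) => -[i il ->]; exists i.
Qed.

Lemma card_nbhd_in_indexed : uniq s -> uniq l -> #|nbhd_in e [set x in s] y| = size l.
Proof.
move=> s_uniq l_uniq; rewrite nbhd_in_indexed cardsE (card_uniqP _) ?size_map //.
rewrite map_inj_in_uniq // => i k /(allP l_small) hi /(allP l_small) hk /eqP.
by rewrite nth_uniq // => /eqP.
Qed.

End IndexedNeighbourhood.

Lemma nbhd_in_nil (s : seq T) x0 y : indexed_by (size s) (fun i => e y (nth x0 s i)) [::] ->
  nbhd_in e [set x in s] y = set0.
Proof. by move=> hS; rewrite (nbhd_in_indexed hS) //; apply/setP => z; rewrite !inE. Qed.

Section InducedPath.

Variables (q : seq T) (x0 : T).
Hypothesis q_path : induced_path e q.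

Let q_uniq : uniq q := q_path.2.1.
Let q_adj : forall i k, i < size q -> k < size q ->
  e (nth x0 q i) (nth x0 q k) = (i == k.+1) || (k == i.+1) := q_path.2.2 x0.

Let nth_notin j k : j \notin q -> k < size q -> (j == nth x0 q k) = false.
Proof. by move=> jq hk; apply: contraNF jq => /eqP->; rewrite mem_nth. Qed.

Lemma induced_path_stable3_free j : stable3_free (size q) (fun i => e j (nth x0 q i)).
Proof.
move=> i k l ik kl ln Si Sk Sl.
have hi : i < size q by lia. have hk : k < size q by lia.
by have := claw_freeP Si Sk Sl; rewrite !nth_uniq // !q_adj //; lia.
Qed.

Lemma induced_path_no_inner_isolated j : j \notin q ->
  no_inner_isolated (size q) (fun i => e j (nth x0 q i)).
Proof.
move=> jq i i_gt0 hi Si; apply: contraT; rewrite negb_or => /andP[nSl nSr].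
have hl : i.-1 < size q by lia. have hr : i < size q by lia.
have := claw_freeP (a := nth x0 q i) (b := j) (c := nth x0 q i.-1) (d := nth x0 q i.+1).
rewrite e_sym Si (negbTE nSl) (negbTE nSr) !q_adj // !nth_uniq // !nth_notin //.
lia.
Qed.

Lemma induced_path_nbhd_shape j : j \notin q ->
  index_shape (size q) (fun i => e j (nth x0 q i)).
Proof.
move=> jq; apply: index_shapeP.
  exact: induced_path_stable3_free.
exact: induced_path_no_inner_isolated.
Qed.

Lemma induced_path_inner_degree k : 0 < k -> k.+1 < size q ->
  #|nbhd_in e [set x in q] (nth x0 q k)| = 2.
Proof.
move=> k_gt0 hk.
have hS : indexed_by (size q) (fun i => e (nth x0 q k) (nth x0 q i)) [:: k.-1; k.+1].
  by move=> i hi; rewrite q_adj ?inE; lia.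
by rewrite (card_nbhd_in_indexed hS) //= ?inE; lia.
Qed.

Lemma induced_path_segment a m : 0 < m -> a + m <= size q ->
  induced_path e (map (nth x0 q) (iota a m)).
Proof.
move=> m_gt0 ham; split; first by rewrite size_map size_iota.
split; first by rewrite map_nth_iota; [exact/take_uniq/drop_uniq | lia].
move=> z0 i k; rewrite size_map size_iota => hi hk.
by rewrite !(nth_map 0) ?size_iota // !nth_iota // q_adj; lia.
Qed.

Section Outcomes.

Variable y : T.
Local Notation S := (fun i => e y (nth x0 q i)).
Local Notation N := (nbhd_in e [set x in q] y).

Lemma nbhd_edge a : a.+1 < size q -> indexed_by (size q) S [:: a; a.+1] ->
  #|N| = 2 /\ exists u v, N = [set u; v] /\ e u v.
Proof.
move=> ha hS; have hl : all (fun i => i < size q) [:: a; a.+1] by rewrite /=; lia.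
rewrite (card_nbhd_in_indexed hS) //= ?inE; last lia.
split=> //; exists (nth x0 q a), (nth x0 q a.+1); rewrite (nbhd_in_indexed hS) //.
by split; [apply/setP => z; rewrite !inE | rewrite q_adj; lia].
Qed.

Lemma nbhd_segment a m : 0 < m -> a + m <= size q -> indexed_by (size q) S (iota a m) ->
  #|N| = m /\ induces_path_edges e N m.-1.
Proof.
move=> m_gt0 ham hS.
have hl : all (fun i => i < size q) (iota a m) by apply/allP => i; rewrite mem_iota; lia.
rewrite (card_nbhd_in_indexed hS) ?iota_uniq ?size_iota //; split=> //.
exists (map (nth x0 q) (iota a m)); rewrite size_map size_iota prednK //.
by rewrite (nbhd_in_indexed hS) //; split=> //; split=> //; apply: induced_path_segment.
Qed.

Lemma nbhd_2K2 a c : a.+2 < c -> c.+1 < size q ->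
  indexed_by (size q) S [:: a; a.+1; c; c.+1] -> #|N| = 4 /\ induces_2K2 e N.
Proof.
move=> ac hc hS.
have hl : all (fun i => i < size q) [:: a; a.+1; c; c.+1] by rewrite /=; lia.
have N4 : #|N| = 4 by rewrite (card_nbhd_in_indexed hS) //= ?inE; lia.
split=> //; exists (nth x0 q a), (nth x0 q a.+1), (nth x0 q c), (nth x0 q c.+1).
split; last split=> //.
  by rewrite (nbhd_in_indexed hS) //; apply/setP => z; rewrite !inE !orbA.
move=> u v /(nbhd_in_indexedP hS hl)[i il ->] /(nbhd_in_indexedP hS hl)[k kl ->].
have hi := allP hl i il; have hk := allP hl k kl; move: il kl; rewrite !inE.
have /and5P[ha ha1 hc0 hc1 _] := hl.
by rewrite q_adj // !eq_set2 ?nth_uniq //; lia.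
Qed.

Lemma nbhd_end_edge ep a : (ep = 0 \/ ep = (size q).-1) -> a.+1 < size q ->
  ep != a -> ep != a.+1 -> indexed_by (size q) S [:: ep; a; a.+1] ->
  exists u v w, (u = nth x0 q 0 \/ u = nth x0 q (size q).-1) /\
    v \in [set x in q] /\ w \in [set x in q] /\ e v w /\ #|N| = 3 /\ N = [set u; v; w].
Proof.
move=> ep_end ha ep_a ep_a1 hS.
have hep : ep < size q by case: ep_end => ->; lia.
have hl : all (fun i => i < size q) [:: ep; a; a.+1] by rewrite /= hep; lia.
exists (nth x0 q ep), (nth x0 q a), (nth x0 q a.+1).
split; first by case: ep_end => ->; [left | right].
have ha0 : a < size q := ltnW ha.
rewrite !inE !mem_nth ?q_adj //; split=> //; split=> //; split; first lia.
split; first by rewrite (card_nbhd_in_indexed hS) //= !inE; lia.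
by rewrite (nbhd_in_indexed hS) //; apply/setP => z; rewrite !inE !orbA.
Qed.

End Outcomes.

End InducedPath.

Lemma hole_rot p k : hole e p -> hole e (rot k p).
Proof.
move=> p_hole; have [/rot_oversize -> //|/ltnW hk] := leqP (size p) k.
have [p4 [p_uniq p_adj]] := p_hole.
split; first by rewrite size_rot. split; first by rewrite rot_uniq.
move=> x0 i l; rewrite size_rot => hi hl.
by rewrite !nth_rot // p_adj ?ltn_pmod ?eqn_succ_mod_addr //; lia.
Qed.

Lemma hole_nth_adj p x0 i k : hole e p -> i < size p -> k < size p ->
  e (nth x0 p i) (nth x0 p k) =
    [|| i == k.+1, k == i.+1, (i == 0) && (k == (size p).-1) | (k == 0) && (i == (size p).-1)].
Proof.
move=> [p4 [_ p_adj]] hi hk; rewrite p_adj //.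
have succ_mod t : t < size p -> t.+1 %% size p = if t.+1 == size p then 0 else t.+1.
  by move=> ht; case: eqP => [->|ne]; [exact: modnn | apply: modn_small; lia].
by rewrite !succ_mod //; do 2 case: ifP => /eqP ?; lia.
Qed.

Section HoleCons.

Variables (x : T) (q : seq T).
Hypothesis xq_hole : hole e (x :: q).

Lemma hole_cons_size : 2 < size q.
Proof. by case: xq_hole. Qed.

Lemma hole_cons_induced_path : induced_path e q.
Proof.
have [_ [/andP[_ q_uniq] _]] := xq_hole; have q3 := hole_cons_size.
split; first lia. split=> // x0 i k hi hk.
by rewrite -[nth x0 q i]/(nth x0 (x :: q) i.+1) -[nth x0 q k]/(nth x0 (x :: q) k.+1)
  hole_nth_adj //=; lia.
Qed.

Lemma hole_cons_adj x0 i : i < size q -> e x (nth x0 q i) = (i == 0) || (i == (size q).-1).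
Proof.
move=> hi; have q3 := hole_cons_size.
by rewrite -[x]/(nth x0 (x :: q) 0) -[nth x0 q i]/(nth x0 (x :: q) i.+1) hole_nth_adj //=; lia.
Qed.

(* Otherwise [nth j q i] would centre a claw with leaves [j], [x] and [nth j q k]. *)
Lemma hole_cons_end_nbhd j i k : j \notin x :: q -> ~~ e j x ->
  (i == 0) || (i == (size q).-1) -> 0 < k < (size q).-1 ->
  e (nth j q i) (nth j q k) -> e j (nth j q i) -> e j (nth j q k).
Proof.
rewrite inE negb_or => /andP[jx jq] njx i_end k_inner ik ji.
have q3 := hole_cons_size; have [_ [/andP[xq _] _]] := xq_hole.
have [hi hk] : i < size q /\ k < size q by split; lia.
have jk : j != nth j q k by apply: contraNneq jq => ->; rewrite mem_nth.
have xk : x != nth j q k by apply: contraNneq xq => ->; rewrite mem_nth.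
have xi : e (nth j q i) x by rewrite e_sym hole_cons_adj.
have nxk : e x (nth j q k) = false by rewrite hole_cons_adj //; lia.
have ij : e (nth j q i) j by rewrite e_sym.
by have := claw_freeP ij xi ik jx jk xk; rewrite (negbTE njx) nxk orbF.
Qed.

Lemma hole_cons_nbhd_ends j : j \notin x :: q -> ~~ e j x ->
  (e j (nth j q 0) -> e j (nth j q 1)) /\
  (e j (nth j q (size q).-1) -> e j (nth j q (size q).-2)).
Proof.
move=> jxq njx; have q3 := hole_cons_size; have [_ [_ q_adj]] := hole_cons_induced_path.
have [qn1 qn2] : (size q).-1 < size q /\ (size q).-2 < size q by split; lia.
by split; apply: hole_cons_end_nbhd => //; rewrite ?eqxx ?orbT ?q_adj //; lia.
Qed.

End HoleCons.

Lemma hole_rot_to p x : hole e p -> x \in p ->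
  exists q : seq T, hole e (x :: q) /\ p =i x :: q.
Proof.
move=> p_hole /rot_to[i q p_rot]; exists q; rewrite -p_rot; split; first exact: hole_rot.
by move=> y; rewrite mem_rot.
Qed.

Lemma hole_degree p y : hole e p -> y \in p -> #|nbhd_in e [set x in p] y| = 2.
Proof.
move=> p_hole /(hole_rot_to p_hole)[q [yq_hole pyq]]; have q3 := hole_cons_size yq_hole.
have -> : [set x in p] = [set x in y :: q] by apply/setP => z; rewrite !inE pyq.
have hS : indexed_by (size (y :: q)) (fun i => e y (nth y (y :: q) i)) [:: 1; size q].
  by move=> i hi; rewrite -[y in e y _]/(nth y (y :: q) 0) hole_nth_adj //= !inE; lia.
by rewrite (card_nbhd_in_indexed hS) //= ?inE; [lia | case: yq_hole => _ [] | lia].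
Qed.

Lemma hole_dominated_size p j : hole e p -> all (e j) p -> size p = 4 \/ size p = 5.
Proof.
move=> p_hole /allP full; have [p4 [p_uniq _]] := p_hole.
have [p6|] := leqP 6 (size p); last lia.
have jp i : i < size p -> e j (nth j p i) by move=> hi; apply/full/mem_nth.
have [lt0 lt2 lt4] : [/\ 0 < size p, 2 < size p & 4 < size p] by split; lia.
have := claw_freeP (jp 0 lt0) (jp 2 lt2) (jp 4 lt4).
by rewrite !nth_uniq ?hole_nth_adj //; lia.
Qed.

Lemma path_nbhd_classification p j : induced_path e p -> j \notin p ->
  nbhd_classification e p j.
Proof.
move=> p_path jp; rewrite /nbhd_classification /=.
have -> : head j p = nth j p 0 by case: (p).
rewrite -nth_last.
case: (induced_path_nbhd_shape j p_path jp)
  => [hS|a a_end ha hS|a ha hS|a ha hS|a ha hS|a c ac hc hS|p2 hS|a ha hS|c c1 hc hS].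
- by left; exact: nbhd_in_nil hS.
- do 7 right; left; split=> //; rewrite (nbhd_in_indexed hS) /= ?ha //.
  by case: a_end => ->; [left | right]; apply/setP => z; rewrite !inE.
- by right; left; exact (nbhd_edge p_path ha hS).
- have hl : all (fun i => i < size p) [:: a; a.+1; a.+2] by rewrite /=; lia.
  have [N3 N_path] := nbhd_segment p_path (a := a) (m := 3) isT ltac:(lia) hS.
  have [inner|] := boolP ((0 < a) && (a.+3 < size p)).
    do 5 right; left; split=> //; split=> // y /(nbhd_in_indexedP hS hl)[k kl ->].
    by apply: (induced_path_inner_degree j p_path); move: kl; rewrite !inE; lia.
  rewrite negb_and -!leqNgt leqn0 => /orP[/eqP a0|a_end]; do 8 right; split=> //.
    by subst a; apply: (nbhd_end_edge p_path (ep := 0) (a := 1)) => //; left.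
  apply: (nbhd_end_edge p_path (ep := a.+2) (a := a)); try lia.
  by move=> i hi; rewrite hS // !inE; lia.
- have [N4 N_path] := nbhd_segment p_path (a := a) (m := 4) isT ltac:(lia) hS.
  by do 2 right; left; split=> //; right.
- have [N4 N_2K2] := nbhd_2K2 p_path ac hc hS.
  by do 2 right; left; split=> //; left.
- do 4 right; left; split=> //; split; first lia.
  rewrite (nbhd_in_indexed hS) /=; last lia.
  by apply/setP => z; rewrite !inE.
- do 8 right; split=> //; apply: (nbhd_end_edge p_path (ep := (size p).-1) (a := a)); try lia.
  by move=> i hi; rewrite hS // !inE; lia.
- do 8 right; split=> //.
  by apply: (nbhd_end_edge p_path (ep := 0) (a := c)) => //; [left | lia].
Qed.

Lemma hole_dominated_classification p j : hole e p -> all (e j) p ->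
  nbhd_classification e p j.
Proof.
move=> p_hole dom; rewrite /nbhd_classification /=.
have -> : nbhd_in e [set x in p] j = [set x in p].
  by apply/setP => y; rewrite !inE; apply/andb_idr/(allP dom).
by case: (hole_dominated_size p_hole dom) => ?; [do 3 right; left | do 6 right; left].
Qed.

Lemma hole_nbhd_classification p j : hole e p -> j \notin p ->
  nbhd_classification e p j.
Proof.
move=> p_hole jp; have [dom|/allPn[x xp njx]] := boolP (all (e j) p).
  exact: hole_dominated_classification.
rewrite /nbhd_classification /=.
have [q [xq_hole pxq]] := hole_rot_to p_hole xp.
have jxq : j \notin x :: q by rewrite -pxq.
have -> : nbhd_in e [set y in p] j = nbhd_in e [set y in q] j.
  apply/setP => y; rewrite !inE pxq inE andb_orl.
  by case: eqVneq => [->|_]; rewrite ?(negbTE njx).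
have [first_end last_end] := hole_cons_nbhd_ends xq_hole jxq njx.
have q_path := hole_cons_induced_path xq_hole; have q3 := hole_cons_size xq_hole.
have [q0 q1 qn1 qn2] : [/\ 0 < size q, 1 < size q, (size q).-1 < size q & (size q).-2 < size q].
  by split; lia.
have jq : j \notin q by move: jxq; rewrite inE negb_or => /andP[].
case: (induced_path_nbhd_shape j q_path jq)
  => [hS|a a_end ha hS|a ha hS|a ha hS|a ha hS|a c ac hc hS|q2 hS|a ha hS|c c1 hc hS].
- by left; exact: nbhd_in_nil hS.
- by move: first_end last_end; rewrite !hS // !inE; case: a_end => ->; lia.
- by right; left; exact (nbhd_edge q_path ha hS).
- have [N3 N_path] := nbhd_segment q_path (a := a) (m := 3) isT ltac:(lia) hS.
  do 5 right; left; split=> //; split=> // y; rewrite !inE => /andP[yq _].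
  by apply: hole_degree; rewrite // pxq inE yq orbT.
- have [N4 N_path] := nbhd_segment q_path (a := a) (m := 4) isT ltac:(lia) hS.
  by do 2 right; left; split=> //; right.
- have [N4 N_2K2] := nbhd_2K2 q_path ac hc hS.
  by do 2 right; left; split=> //; left.
- by move: first_end; rewrite !hS // !inE; lia.
- by move: last_end; rewrite !hS // !inE; lia.
- by move: first_end; rewrite !hS // !inE; lia.
Qed.

End ClawFree.

Theorem lemma2 (T : finType) (e : rel T) (p : seq T) (j : T) :
  symmetric e -> irreflexive e -> claw_free e ->
  (induced_path e p \/ hole e p) ->
  j \notin p ->
  let L := [set x in p] in
  let N := nbhd_in e L j in
  (* (a.i) *)   N = set0
  (* (a.ii) *)  \/ (#|N| = 2 /\ exists a b, N = [set a; b] /\ e a b)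
  (* (a.iii) *) \/ (#|N| = 4 /\ (induces_2K2 e N \/ induces_path_edges e N 3))
  (* (a.iv) *)  \/ (hole e p /\ size p = 4 /\ N = L)
  (* (a.v) *)   \/ (induced_path e p /\ 2 <= size p /\ N = [set head j p; last j p])
  (* (b.i) *)   \/ (#|N| = 3 /\ induces_path_edges e N 2 /\
                    forall y, y \in N -> #|nbhd_in e L y| = 2)
  (* (b.ii) *)  \/ (hole e p /\ size p = 5 /\ N = L)
  (* (b.iii) *) \/ (induced_path e p /\ (N = [set head j p] \/ N = [set last j p]))
  (* (b.iv) *)  \/ (induced_path e p /\ exists ep x y,
                    (ep = head j p \/ ep = last j p) /\ x \in L /\ y \in L /\ e x y /\
                    #|N| = 3 /\ N = [set ep; x; y]).
Proof.
move=> e_sym _ e_claw [p_path|p_hole] jp.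
  exact: (path_nbhd_classification e_sym e_claw p_path jp).
exact: (hole_nbhd_classification e_sym e_claw p_hole jp).
Qed.
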